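(* Let $\Sigma^*$ be an $n\times n$ positive definite matrix whose conditional independence structure is a tree $T^*$, let $D^*$ be a diagonal matrix with nonnegative entries, and let $\Sigma^o=\Sigma^*+D^*$. Let $\lambda_{\min}$ be a real number that is at most the smallest eigenvalue of $\Sigma^*$, and suppose $D^*_{bb}<\lambda_{\min}$ for every node $b$ of $T^*$ that is the neighbor of a leaf of $T^*$. Then for every decomposition $\Sigma^o=\Sigma'+D'$ in which $\Sigma'$ is positive definite with smallest eigenvalue at least $\lambda_{\min}$ and conditional independence structure a tree $T'$, and $D'$ is diagonal with nonnegative entries, we have $T'=T^*$.
   Context: For an $n\times n$ positive definite matrix $\Sigma$ with inverse $\Omega$, its conditional independence structure is the graph on $\{1,\dots,n\}$ with an edge $\{i,j\}$ ($i\neq j$) iff $\Omega_{ij}\neq 0$. *)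

From HB Require Import structures.
From mathcomp Require Import all_boot all_order all_algebra.
From mathcomp Require Import reals.
Set Implicit Arguments. Unset Strict Implicit. Unset Printing Implicit Defensive.
Import Order.TTheory GRing.Theory Num.Theory.
Local Open Scope ring_scope.

Section Defs.
Variable R : realType.

Definition posdef n (A : 'M[R]_n) : Prop :=
  A^T = A /\ forall x : 'cV[R]_n, x != 0 -> 0 < (x^T *m A *m x) 0 0.

Definition nonneg_diag n (D : 'M[R]_n) : Prop :=
  is_diag_mx D /\ forall i, 0 <= D i i.

Definition min_eig_ge n (A : 'M[R]_n) (lam : R) : Prop :=
  forall a : R, eigenvalue A a -> lam <= a.

Definition ci_graph n (S : 'M[R]_n) : rel 'I_n :=
  fun i j => (i != j) && (invmx S i j != 0).
End Defs.

Definition connected_graph n (e : rel 'I_n) : Prop :=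
  forall i j, connect e i j.

Definition acyclic_graph n (e : rel 'I_n) : Prop :=
  ~ exists s : seq 'I_n, [/\ 3 <= size s, uniq s & cycle e s]%N.

Definition is_tree n (e : rel 'I_n) : Prop :=
  connected_graph e /\ acyclic_graph e.

Definition is_leaf n (e : rel 'I_n) (l : 'I_n) : Prop :=
  #|[set j | e l j]| = 1%N.

Definition leaf_neighbor n (e : rel 'I_n) (b : 'I_n) : Prop :=
  exists l, is_leaf e l /\ e l b.

(* For a positive definite S whose concentration graph is a tree, every entry of S
   is nonzero and S factorizes along the tree: S_jj S_ik = S_ij S_jk whenever j
   separates i from k.  If j does not separate them, the ratio S_ij S_jk / S_ik,
   computed through the neighbour of j on the way to i and k, is < S_jj and
   <= S_jj - lam_min (by the 2x2 principal minors of S and of S - lam_min).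
   Sigma* and Sigma' share their off-diagonal entries, hence all these ratios, so
   a vertex j that separates two vertices in one tree but not in the other has a
   strictly smaller diagonal entry on the separating side; it then separates
   nothing in the other tree, i.e. it is a leaf there.  An edge of one tree that
   is missing from the other produces such a j.  Its neighbour b in the tree where
   j is a leaf must factorize S_ji and S_jk in the other matrix as well (for T*
   this is where D*_bb < lam_min is used), and a factorization of S_ik through j
   is incompatible with factorizations of S_ji and S_jk through b. *)

From HB Require Import structures.
From mathcomp Require Import all_boot all_order all_algebra.
From mathcomp Require Import reals complex ring lra.
Import Order.TTheory GRing.Theory Num.Theory.
Local Open Scope ring_scope.
Set Implicit Arguments. Unset Strict Implicit. Unset Printing Implicit Defensive.

Section Separation.
Variable n : nat.
Implicit Types (e : rel 'I_n) (i j k m x y : 'I_n).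

Definition avoid e j : rel 'I_n := fun a b => [&& e a b, a != j & b != j].

Definition separates e j i k := [&& i != j, k != j & ~~ connect (avoid e j) i k].

Definition noncut_vertex e j := forall i k, ~~ separates e j i k.

Lemma avoid_connect_neq e j x y : connect (avoid e j) x y -> x != j -> y != j.
Proof.
move=> /connectP[p + ->]; elim: p x => //= a p IHp x /andP[/and3P[_ _ aj] pth] _.
exact: IHp pth aj.
Qed.

Lemma path_avoid e j x s : path e x s -> j \notin x :: s -> path (avoid e j) x s.
Proof.
elim: s x => //= a s IHs x /andP[exa pth]; rewrite !inE !negb_or => /and3P[jx ja js].
by rewrite /avoid exa eq_sym jx eq_sym ja IHs // inE negb_or ja.
Qed.

Lemma connect_uniq_path (r : rel 'I_n) x y :
  connect r x y -> exists p, [/\ path r x p, uniq (x :: p) & last x p = y].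
Proof. by move=> /connectP[p /shortenP[p' ? ? _] ->]; exists p'. Qed.

Lemma uniq_path_connect_avoid e x m q :
  path e x (m :: q) -> uniq (x :: m :: q) -> connect (avoid e x) m (last m q).
Proof.
move=> /= /andP[_ pth] /andP[xmq _]; apply/connectP; exists q => //.
exact: path_avoid.
Qed.

Lemma separates_neq e j i k : separates e j i k -> [/\ i != j, k != j & i != k].
Proof.
move=> /and3P[ij kj sep]; split => //.
by apply: contraNneq sep => ->; rewrite connect0.
Qed.

Lemma edge_not_separates e j i k : e i k -> ~~ separates e j i k.
Proof.
move=> eik; apply/negP => /and3P[ij kj /negP]; apply; apply: connect1.
by rewrite /avoid eik ij kj.
Qed.

Section Tree.
Variable e : rel 'I_n.
Hypotheses (e_sym : symmetric e) (e_irr : irreflexive e) (e_tree : is_tree e).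

Lemma avoid_sym j : symmetric (avoid e j).
Proof. by move=> a b; rewrite /avoid e_sym [(a != j) && _]andbC. Qed.

Lemma connect_avoid_sym j x y : connect (avoid e j) x y = connect (avoid e j) y x.
Proof. exact/sym_connect_sym/avoid_sym. Qed.

Lemma separates_sym j i k : separates e j i k = separates e j k i.
Proof. by rewrite /separates connect_avoid_sym andbA [(i != j) && _]andbC -andbA. Qed.

Lemma edge_neq i k : e i k -> i != k.
Proof. by apply: contraTneq => ->; rewrite e_irr. Qed.

Lemma tree_edge_separates i k j : e i k -> j != i -> j != k ->
  separates e i j k \/ separates e k j i.
Proof.
move=> eik ji jk; rewrite /separates ji jk (edge_neq eik) eq_sym (edge_neq eik) /=.
case: (boolP (connect (avoid e i) j k)) => cik; last by left.
case: (boolP (connect (avoid e k) j i)) => cki; last by right.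
(* Otherwise k and i are joined without the edge ik, which closes a cycle. *)
exfalso; pose f := [rel a b | e a b && ~~ ((a == i) && (b == k) || (a == k) && (b == i))].
have avoid_f c : c \in [:: i; k] -> subrel (connect (avoid e c)) (connect f).
  move=> c_ik; apply: connect_sub => a b /and3P[eab ac bc]; apply: connect1.
  by move: c_ik; rewrite /= eab !inE => /orP[] /eqP <-; rewrite (negbTE ac) (negbTE bc) ?andbF.
have /connect_uniq_path[p [pth uq lst]] : connect f k i.
  apply: (@connect_trans _ _ j); last by apply: (avoid_f k); rewrite ?inE ?eqxx ?orbT.
  by apply: (avoid_f i); rewrite ?inE ?eqxx // connect_avoid_sym.
case: p pth uq lst => [|a [|b p]] pth uq lst.
- by move: lst => /= /eqP; rewrite eq_sym (negbTE (edge_neq eik)).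
- by move: pth lst => /= /andP[/andP[_]] + _ ai; rewrite ai !eqxx orbT.
apply: e_tree.2; exists [:: k, a, b & p]; split => //.
rewrite /cycle rcons_path (sub_path _ pth) /=; last by move=> ? ? /andP[].
by move: lst => /= lst; rewrite lst.
Qed.

Lemma uniq_path_separates x m q : path e x (m :: q) -> uniq (x :: m :: q) ->
  last m q != m -> separates e m x (last m q).
Proof.
move=> pth uq zm; have exm : e x m by case/andP: pth.
have zx : last m q != x.
  by apply: contraTneq uq => zx; rewrite -zx /= mem_last.
have [|] := tree_edge_separates exm zx zm; last by rewrite separates_sym.
by rewrite /separates connect_avoid_sym uniq_path_connect_avoid // !andbF.
Qed.

Lemma nonadjacent_separates i k : i != k -> ~~ e i k -> exists j, separates e j i k.
Proof.
move=> ik nik; have [[|m q] [pth uq lst]] := connect_uniq_path (e_tree.1 i k).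
  by move: lst ik => /= ->; rewrite eqxx.
move: lst nik => /= <- nik; exists m; apply: uniq_path_separates => //.
by apply: contraNneq nik => ->; case/andP: pth.
Qed.

Lemma exists_neighbor j i : j != i -> exists2 m, e j m & connect (avoid e j) m i.
Proof.
move=> ji; have [[|m q] [pth uq lst]] := connect_uniq_path (e_tree.1 j i).
  by move: lst ji => /= ->; rewrite eqxx.
by move: lst => /= <-; exists m; [case/andP: pth | apply: uniq_path_connect_avoid].
Qed.

Lemma neighbor_separates b m x : e b m -> connect (avoid e b) m x -> x != m ->
  separates e m x b.
Proof.
move=> ebm cmx xm; have xb : x != b.
  by apply: avoid_connect_neq cmx _; rewrite eq_sym edge_neq.
have [|//] := tree_edge_separates ebm xb xm.
by rewrite /separates connect_avoid_sym cmx !andbF.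
Qed.

Lemma noncut_leaf_separates j b x : noncut_vertex e j -> e j b ->
  x != j -> x != b -> separates e b j x.
Proof.
move=> ncj ejb xj xb; have [sj|] := tree_edge_separates ejb xj xb.
  by have := ncj x b; rewrite sj.
by rewrite separates_sym.
Qed.

Lemma noncut_is_leaf j b : noncut_vertex e j -> e j b -> is_leaf e j.
Proof.
move=> ncj ejb; rewrite /is_leaf (_ : [set y | e j y] = [set b]) ?cards1 //.
apply/setP => y; rewrite !inE; apply/idP/eqP => [ejy|->//]; apply/eqP.
apply: contraTT ejy => yb; apply/negP => ejy.
have yj : y != j by rewrite eq_sym edge_neq.
by have := edge_not_separates b ejy; rewrite noncut_leaf_separates.
Qed.

End Tree.
End Separation.

Section NormalQuadraticForm.
Variable C : numClosedFieldType.
Local Open Scope sesquilinear_scope.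

Lemma spectral_diag_eigenvalue n (A : 'M[C]_n) i :
  A \is normalmx -> eigenvalue A (spectral_diag A 0 i).
Proof.
move=> /orthomx_spectralP; rewrite invmx_unitary ?spectral_unitarymx //.
set P := spectralmx A => AE.
have /unitarymxP PPt := spectral_unitarymx A; rewrite -/P in PPt.
apply/eigenvalueP; exists (row i P).
  rewrite -row_mul [in X in row _ X]AE !mulmxA PPt mul1mx mul_diag_mx.
  by apply/rowP => j; rewrite !mxE.
apply: contraTneq isT => Pi0; have := congr1 (row i) PPt.
rewrite row_mul Pi0 mul0mx row1 => /rowP /(_ i).
by rewrite !mxE !eqxx => /esym/eqP; rewrite oner_eq0.
Qed.

Lemma normalmx_quad_ge n (A : 'M[C]_n) (lam : C) : A \is normalmx ->
  (forall i, lam <= spectral_diag A 0 i) ->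
  forall z : 'cV_n, lam * (z^t* *m z) 0 0 <= (z^t* *m A *m z) 0 0.
Proof.
move=> /orthomx_spectralP; rewrite invmx_unitary ?spectral_unitarymx //.
set P := spectralmx A; set d := spectral_diag A => AE d_ge z.
have /unitarymxP PPt := spectral_unitarymx A; rewrite -/P in PPt.
have PtP : P^t* *m P = 1%:M := mulmx1C PPt.
have ytE : (P *m z)^t* = z^t* *m P^t* by rewrite trmx_mul map_mxM.
have -> : z^t* *m A *m z = (P *m z)^t* *m diag_mx d *m (P *m z).
  by rewrite ytE AE !mulmxA.
have -> : z^t* *m z = (P *m z)^t* *m (P *m z).
  by rewrite ytE -mulmxA (mulmxA (P^t*)) PtP mul1mx.
move: (P *m z) => y; rewrite -subr_ge0 !mxE mulr_sumr -sumrB.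
apply: sumr_ge0 => j _; rewrite mul_mx_diag !mxE.
have -> : (y j 0)^* * d 0 j * y j 0 - lam * ((y j 0)^* * y j 0)
    = (d 0 j - lam) * (y j 0 * (y j 0)^*) by ring.
by apply: mulr_ge0; rewrite ?subr_ge0 ?mul_conjC_ge0.
Qed.

End NormalQuadraticForm.

Section SymmetricQuadraticForm.
Variable R : realType.
Local Open Scope complex_scope.

Lemma real_complex_conj (x : R) : (x%:C)^*%R = x%:C.
Proof. by apply/CrealP; rewrite realE !lecE /= eqxx le_total. Qed.

Lemma real_complex_Re (z : R[i]) : z \is Num.real -> z = (complex.Re z)%:C.
Proof.
case: z => a b; rewrite realE !lecE /=.
by move=> /orP[] /andP[/eqP E _]; [rewrite E | rewrite -E].
Qed.

Local Open Scope sesquilinear_scope.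

Lemma min_eig_ge_quad n (S : 'M[R]_n) lam : S^T = S -> min_eig_ge S lam ->
  forall x : 'cV_n, lam * (x^T *m x) 0 0 <= (x^T *m S *m x) 0 0.
Proof.
move=> Ssym S_ge x; pose A := map_mx (real_complex R) S.
have Aherm : A \is hermsymmx.
  rewrite is_hermitianmxE expr0 scale1r; apply/eqP/matrixP=> i j.
  by rewrite !mxE real_complex_conj -[in LHS]Ssym mxE.
have Anormal := hermitian_normalmx Aherm.
have d_ge i : lam%:C <= spectral_diag A 0 i.
  have /mxOverP /(_ 0 i) /real_complex_Re dE := hermitian_spectral_diag_real Aherm.
  rewrite [spectral_diag _ _ _]dE lecR; apply: S_ge.
  rewrite eigenvalue_root_char -(fmorph_root (real_complex R)) map_char_poly.
  by rewrite -eigenvalue_root_char; have := spectral_diag_eigenvalue i Anormal; rewrite dE.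
have := normalmx_quad_ge Anormal d_ge (map_mx (real_complex R) x).
have -> : (map_mx (real_complex R) x)^t* = map_mx (real_complex R) x^T.
  by apply/matrixP => i j; rewrite !mxE real_complex_conj.
by rewrite -!map_mxM !mxE -rmorphM lecR.
Qed.

End SymmetricQuadraticForm.

Section PositiveDefinite.
Variables (R : realType) (n : nat).
Implicit Types (S M : 'M[R]_n) (A : {set 'I_n}).

(* i and k are conditionally independent given j. *)
Definition factors S j i k : Prop := S j j * S i k = S i j * S j k.

Definition cov_ratio S b i k := S i b * S b k / S i k.

Lemma factors_cov_ratio S j i k : S i k != 0 -> factors S j i k -> cov_ratio S j i k = S j j.
Proof. by move=> ik0; rewrite /cov_ratio => <-; rewrite mulfK. Qed.

Lemma quad_form_delta M p q :
  (delta_mx p 0 : 'cV_n)^T *m M *m (delta_mx q 0 : 'cV_n) = const_mx (M p q).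
Proof. by apply/matrixP => ? ?; rewrite !ord1 trmx_delta -rowE -colE !mxE. Qed.

Lemma quad_form_delta2 M j m a b :
  let x : 'cV_n := a *: delta_mx j 0 + b *: delta_mx m 0 in
  (x^T *m M *m x) 0 0 = a * a * M j j + a * b * M j m + b * a * M m j + b * b * M m m.
Proof.
by rewrite /= !raddfD /= !linearZ /= !mulmxDl -!scalemxAl !quad_form_delta !mxE; ring.
Qed.

Lemma posdef_sym S i j : posdef S -> S i j = S j i.
Proof. by move=> [Ssym _]; rewrite -{1}Ssym mxE. Qed.

Lemma delta_mx_neq0 j : (delta_mx j 0 : 'cV[R]_n) != 0.
Proof. by apply/eqP => /matrixP /(_ j 0); rewrite !mxE !eqxx => /eqP; rewrite oner_eq0. Qed.

Lemma posdef_diag_gt0 S j : posdef S -> 0 < S j j.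
Proof.
by move=> [_ /(_ _ (delta_mx_neq0 j))]; rewrite quad_form_delta mxE.
Qed.

Lemma posdef_unitmx S : posdef S -> S \in unitmx.
Proof.
move=> [_ S_gt0]; apply: contraT; rewrite unitmxE unitfE negbK => /det0P[v v0 vS].
have := S_gt0 v^T; rewrite trmx_eq0 => /(_ v0).
by rewrite trmxK vS mul0mx mxE ltxx.
Qed.

Lemma posdef_invmx S : posdef S -> posdef (invmx S).
Proof.
move=> SP; have [Ssym S_gt0] := SP; have Su := posdef_unitmx SP.
split; first by rewrite trmx_inv Ssym.
move=> x x0; have Kx0 : invmx S *m x != 0.
  by apply: contraNneq x0 => Kx0; rewrite -(mulKVmx Su x) Kx0 mulmx0.
have := S_gt0 _ Kx0.
by rewrite trmx_mul trmx_inv Ssym -!mulmxA mulKVmx.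
Qed.

Lemma posdef_kernel M A (u : 'cV_n) : posdef M ->
  (forall a, a \notin A -> u a 0 = 0) ->
  (forall a, a \in A -> (M *m u) a 0 = 0) -> u = 0.
Proof.
move=> [_ M_gt0] u_out Mu_in; apply/eqP; apply: contraT => /M_gt0.
rewrite -mulmxA mxE big1 ?ltxx // => a _; rewrite mxE.
by case: (boolP (a \in A)) => aA; [rewrite Mu_in ?mulr0 | rewrite u_out ?mul0r].
Qed.

Lemma posdef_2x2 S j m : posdef S -> j != m -> S j m ^+ 2 < S j j * S m m.
Proof.
move=> SP jm; have Smm := posdef_diag_gt0 m SP.
have x0 : S m m *: delta_mx j 0 + (- S j m) *: delta_mx m 0 != 0 :> 'cV_n.
  apply/eqP => /matrixP /(_ j 0); rewrite !mxE !eqxx (negbTE jm) /=.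
  by rewrite mulr1 mulr0 addr0 => /eqP; rewrite gt_eqF.
have := SP.2 _ x0; rewrite quad_form_delta2 (posdef_sym m j SP) => Q.
have : 0 < S m m * (S j j * S m m - S j m ^+ 2) by move: Q; congr (_ < _); ring.
by rewrite pmulr_rgt0 // subr_gt0.
Qed.

Lemma min_eig_ge_2x2 S lam j m : posdef S -> min_eig_ge S lam -> j != m ->
  S j m ^+ 2 <= (S j j - lam) * S m m.
Proof.
move=> SP S_ge jm; have Smm := posdef_diag_gt0 m SP; have S2 := posdef_2x2 SP jm.
have := min_eig_ge_quad SP.1 S_ge (S m m *: delta_mx j 0 + (- S j m) *: delta_mx m 0).
set x := (X in X^T *m X).
have -> : x^T *m x = x^T *m 1%:M *m x by rewrite mulmx1.
rewrite !quad_form_delta2 (posdef_sym m j SP) !mxE !eqxx (negbTE jm) eq_sym (negbTE jm).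
move=> /= Q.
have [lam_ge0|lam_lt0] := leP 0 lam; last by nra.
have : 0 <= S m m * ((S j j - lam) * S m m - S j m ^+ 2) by nra.
by rewrite pmulr_rge0 // subr_ge0.
Qed.

Lemma invmx_block0 S A : posdef S ->
  (forall a b, a \in A -> b \notin A -> S a b = 0) ->
  forall a b, a \in A -> b \notin A -> invmx S a b = 0.
Proof.
move=> SP S0 a b aA bA.
pose u : 'cV_n := \col_c (if c \in A then invmx S c b else 0).
suff /matrixP /(_ a 0) : u = 0 by rewrite !mxE aA.
apply: (posdef_kernel (A := A) SP) => [c cA | c cA]; first by rewrite mxE (negbTE cA).
have cb : c != b by apply: contraNneq bA => <-.
transitivity ((S *m invmx S) c b); last by rewrite mulmxV ?posdef_unitmx // mxE (negbTE cb).
rewrite !mxE; apply: eq_bigr => d _; rewrite mxE.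
by case: ifP => // /negbT dA; rewrite S0 ?mul0r.
Qed.

Lemma invmx_block_factors S A j i k : posdef S ->
  j \notin A -> i \in A -> k \notin A -> k != j ->
  (forall a b, a \in A -> b \notin A -> b != j -> invmx S a b = 0) ->
  factors S j i k.
Proof.
move=> SP jA iA kA kj K0.
have Sjj0 : S j j != 0 by rewrite gt_eqF ?posdef_diag_gt0.
pose c := S j k / S j j; pose v : 'cV_n := col k S - c *: col j S.
have vj : v j 0 = 0 by rewrite !mxE /c divfK ?subrr.
have Kv a : (invmx S *m v) a 0 = (a == k)%:R - c * (a == j)%:R.
  by rewrite mulmxBr -scalemxAr !colE !mulmxA mulVmx ?posdef_unitmx // !mul1mx !mxE !andbT.
have vi : v i 0 = S i k - c * S i j by rewrite !mxE.
clearbody v.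
pose u : 'cV_n := \col_a (if a \in A then v a 0 else 0).
suff /matrixP /(_ i 0) : u = 0.
  by rewrite !mxE iA vi /c => /eqP; rewrite subr_eq0 /factors => /eqP ->; field.
apply: (posdef_kernel (A := A) (posdef_invmx SP)) => [a aA | a aA].
  by rewrite mxE (negbTE aA).
have [ak aj] : a != k /\ a != j by split; apply: contraTneq aA => ->.
transitivity ((invmx S *m v) a 0); last by rewrite Kv (negbTE ak) (negbTE aj) mulr0 subr0.
rewrite !mxE; apply: eq_bigr => b _; rewrite mxE; case: ifP => // /negbT bA.
by have [->|bj] := eqVneq b j; rewrite ?vj // K0 ?mul0r ?mulr0.
Qed.

Lemma factors_eq0 S j i k : posdef S -> factors S j i k ->
  S i j = 0 \/ S j k = 0 -> S i k = 0.
Proof.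
move=> SP fac ijk0; have Sjj0 : S j j != 0 by rewrite gt_eqF ?posdef_diag_gt0.
apply/eqP; have := mulf_eq0 (S j j) (S i k); rewrite (negbTE Sjj0) /= => <-.
by rewrite fac; case: ijk0 => ->; rewrite ?mul0r ?mulr0.
Qed.

End PositiveDefinite.

Section CIGraph.
Variables (R : realType) (n : nat).
Implicit Types (S : 'M[R]_n).

Lemma ci_graph_sym S : posdef S -> symmetric (ci_graph S).
Proof. by move=> SP a b; rewrite /ci_graph eq_sym (posdef_sym a b (posdef_invmx SP)). Qed.

Lemma ci_graph_irr S : irreflexive (ci_graph S).
Proof. by move=> a; rewrite /ci_graph eqxx. Qed.

(* The global Markov property of Gaussian graphical models. *)
Lemma separates_factors S j i k : posdef S -> separates (ci_graph S) j i k -> factors S j i k.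
Proof.
move=> SP /and3P[ij kj sep].
pose A := [set x | connect (avoid (ci_graph S) j) i x].
apply: (invmx_block_factors (A := A)); rewrite ?inE ?connect0 //.
  by apply/negP => /avoid_connect_neq /(_ ij); rewrite eqxx.
move=> a b; rewrite !inE => cia cib bj; have ab : a != b by apply: contraNneq cib => <-.
apply/eqP; apply: contraNT cib => Kab.
apply: connect_trans (cia) (connect1 _).
by rewrite /avoid /ci_graph ab Kab bj (avoid_connect_neq cia ij).
Qed.

End CIGraph.

Section TreeCovariance.
Variables (R : realType) (n : nat) (S : 'M[R]_n) (lam : R).
Hypotheses (SP : posdef S) (S_tree : is_tree (ci_graph S)) (S_eig : min_eig_ge S lam).
Local Notation e := (ci_graph S).
Let e_sym := ci_graph_sym SP.
Let e_irr := @ci_graph_irr R n S.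

Lemma ci_edge_cov_neq0 i k : e i k -> S i k != 0.
Proof.
move=> eik; apply/negP => /eqP Sik0.
pose A := [set x | connect (avoid e k) i x].
have ik : i != k := edge_neq e_irr eik.
have Ak a : a \in A -> a != k by rewrite inE => /avoid_connect_neq; apply.
have S_k0 a : a \in A -> S a k = 0.
  move=> aA; have [->//|ai] := eqVneq a i.
  have [sa|] := tree_edge_separates e_sym e_irr S_tree eik ai (Ak a aA).
    by apply: factors_eq0 SP (separates_factors SP sa) _; right.
  by move: aA; rewrite inE /separates connect_avoid_sym // => ->; rewrite !andbF.
have S0 a b : a \in A -> b \notin A -> S a b = 0.
  move=> aA bA; have [->|bk] := eqVneq b k; first exact: S_k0.
  have sk : separates e k a b.
    rewrite /separates Ak // bk; apply: contra bA => cab.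
    by rewrite inE (connect_trans _ cab) // -inE.
  by apply: factors_eq0 SP (separates_factors SP sk) _; left; rewrite S_k0.
move: eik; rewrite /ci_graph (invmx_block0 SP S0) ?eqxx ?andbF // inE ?connect0 //.
by apply/negP => /avoid_connect_neq /(_ ik); rewrite eqxx.
Qed.

Lemma ci_tree_cov_neq0 i k : S i k != 0.
Proof.
have [<-|ik] := eqVneq i k; first by rewrite gt_eqF ?posdef_diag_gt0.
have [[|m q] [pth uq lst]] := connect_uniq_path (S_tree.1 i k).
  by rewrite -lst eqxx in ik.
rewrite -lst {ik lst}; elim: q i m pth uq => [|y q IHq] x m pth uq /=.
  by apply: ci_edge_cov_neq0; case/andP: pth.
have exm : e x m by case/andP: pth.
have pth' : path e m (y :: q) by case/andP: pth.
have uq' : uniq (m :: y :: q) by case/andP: uq.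
have zm : last y q != m.
  by apply: contraTneq uq' => <-; rewrite /= mem_last.
have := separates_factors SP (uniq_path_separates e_sym e_irr S_tree pth uq zm).
rewrite /factors /= => fac.
have : S m m * S x (last y q) != 0.
  by rewrite fac mulf_neq0 ?(ci_edge_cov_neq0 exm) ?(IHq m y pth' uq').
by rewrite mulf_eq0 negb_or => /andP[].
Qed.

Lemma neighbor_factors b m x : e b m -> connect (avoid e b) m x -> factors S m x b.
Proof.
move=> ebm cmx; have [->//|xm] := eqVneq x m.
exact/separates_factors/(neighbor_separates e_sym e_irr S_tree ebm cmx xm).
Qed.

Lemma cov_ratio_step b m i k : e b m ->
  connect (avoid e b) m i -> connect (avoid e b) m k ->
  cov_ratio S m i k <= S m m -> cov_ratio S b i k <= S m b ^+ 2 / S m m.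
Proof.
move=> ebm cmi cmk le_m; have Smm := posdef_diag_gt0 m SP.
have Smm0 : S m m != 0 by rewrite gt_eqF.
have Sib : S i b = S i m * S m b / S m m.
  by rewrite -(neighbor_factors ebm cmi) [S m m * _]mulrC mulfK.
have Sbk : S b k = S k m * S m b / S m m.
  by rewrite (posdef_sym b k SP) -(neighbor_factors ebm cmk) [S m m * _]mulrC mulfK.
have -> : cov_ratio S b i k = S m b ^+ 2 / S m m ^+ 2 * cov_ratio S m i k.
  rewrite /cov_ratio Sib Sbk (posdef_sym k m SP); field.
  by rewrite Smm0 ci_tree_cov_neq0.
rewrite [X in _ <= X](_ : _ = S m b ^+ 2 / S m m ^+ 2 * S m m); last by field.
by rewrite ler_wpM2l // divr_ge0 ?sqr_ge0.
Qed.

Lemma neighbor_cov_lt b m : b != m -> S m b ^+ 2 / S m m < S b b.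
Proof.
move=> bm; rewrite ltr_pdivrMr ?posdef_diag_gt0 // (posdef_sym m b SP).
exact: posdef_2x2.
Qed.

Lemma cov_ratio_le b i k : cov_ratio S b i k <= S b b.
Proof.
have [p [pth uq lst]] := connect_uniq_path (S_tree.1 b i).
elim: p b pth uq lst => [|m q IHq] b pth uq lst.
  by rewrite -lst factors_cov_ratio ?ci_tree_cov_neq0.
have [->|bk] := eqVneq b k.
  by rewrite factors_cov_ratio ?ci_tree_cov_neq0 // /factors mulrC.
have ebm : e b m by case/andP: pth.
have cmi : connect (avoid e b) m i by rewrite -lst uniq_path_connect_avoid.
have ib : i != b by apply: avoid_connect_neq cmi _; rewrite eq_sym (edge_neq e_irr ebm).
case sb: (separates e b i k).
  by rewrite factors_cov_ratio ?ci_tree_cov_neq0 //; apply: separates_factors SP sb.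
have cik : connect (avoid e b) i k by move: sb; rewrite /separates ib eq_sym bk => /negbFE.
have le_m : cov_ratio S m i k <= S m m.
  by apply: IHq; [case/andP: pth | case/andP: uq | ].
apply: le_trans (cov_ratio_step ebm cmi (connect_trans cmi cik) le_m) _.
exact/ltW/neighbor_cov_lt/(edge_neq e_irr ebm).
Qed.

Lemma cov_ratio_nonsep b i k : i != b -> connect (avoid e b) i k ->
  cov_ratio S b i k < S b b /\ cov_ratio S b i k <= S b b - lam.
Proof.
move=> ib cik; have bi : b != i by rewrite eq_sym.
have [m ebm cmi] := exists_neighbor S_tree bi.
have le_m := cov_ratio_step ebm cmi (connect_trans cmi cik) (cov_ratio_le m i k).
have bm := edge_neq e_irr ebm; split; first exact: le_lt_trans le_m (neighbor_cov_lt bm).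
apply: le_trans le_m _; rewrite ler_pdivrMr ?posdef_diag_gt0 // (posdef_sym m b SP).
exact: min_eig_ge_2x2.
Qed.

Lemma factors_exclusive j b i k : j != b ->
  factors S j i k -> factors S b j i -> factors S b j k -> False.
Proof.
move=> jb fj fbi fbk; have Sbb := posdef_diag_gt0 b SP.
have r_le : S j b ^+ 2 * cov_ratio S b i k <= S j b ^+ 2 * S b b.
  by rewrite ler_wpM2l ?sqr_ge0 ?cov_ratio_le.
have lt_jb : S j b ^+ 2 * S b b < S j j * S b b ^+ 2.
  by rewrite expr2 mulrA ltr_pM2r ?posdef_2x2.
have : S j j * S b b ^+ 2 = S j b ^+ 2 * cov_ratio S b i k.
  apply: (mulIf (ci_tree_cov_neq0 i k)).
  transitivity ((S b b * S j i) * (S b b * S j k)).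
    transitivity ((S j j * S i k) * S b b ^+ 2); first by ring.
    by rewrite fj (posdef_sym i j SP); ring.
  rewrite fbi fbk (posdef_sym b i SP) /cov_ratio; field; exact: ci_tree_cov_neq0.
by move=> E; move: lt_jb; rewrite E => /(le_lt_trans r_le); rewrite ltxx.
Qed.

End TreeCovariance.

Section SharedOffdiagonal.
Variables (R : realType) (n : nat) (Sa Sb : 'M[R]_n) (lam : R).
Hypotheses (Pa : posdef Sa) (Pb : posdef Sb).
Hypotheses (Tb : is_tree (ci_graph Sb)) (Gb : min_eig_ge Sb lam).
Hypothesis offdiag : forall i k, i != k -> Sa i k = Sb i k.

Lemma offdiag_cov_ratio j i k : separates (ci_graph Sa) j i k ->
  Sa j j = cov_ratio Sb j i k.
Proof.
move=> sa; have [ij kj ik] := separates_neq sa.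
rewrite -(factors_cov_ratio _ (separates_factors Pa sa)); last first.
  by rewrite offdiag // ci_tree_cov_neq0.
by rewrite /cov_ratio !offdiag // eq_sym.
Qed.

Lemma separates_diag_eq j i k : separates (ci_graph Sa) j i k ->
  separates (ci_graph Sb) j i k -> Sa j j = Sb j j.
Proof.
move=> sa sb; rewrite (offdiag_cov_ratio sa) factors_cov_ratio ?ci_tree_cov_neq0 //.
exact: separates_factors.
Qed.

Lemma separates_diag_lt j i k : separates (ci_graph Sa) j i k ->
  ~~ separates (ci_graph Sb) j i k -> Sa j j < Sb j j /\ Sa j j <= Sb j j - lam.
Proof.
move=> sa; have [ij kj _] := separates_neq sa; rewrite /separates ij kj negbK => cb.
by rewrite (offdiag_cov_ratio sa); apply: cov_ratio_nonsep.
Qed.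

End SharedOffdiagonal.

Lemma separates_noncut (R : realType) n (Sa Sb : 'M[R]_n) lam :
  posdef Sa -> is_tree (ci_graph Sa) -> min_eig_ge Sa lam ->
  posdef Sb -> is_tree (ci_graph Sb) -> min_eig_ge Sb lam ->
  (forall i k, i != k -> Sa i k = Sb i k) ->
  forall j i k, separates (ci_graph Sa) j i k -> ~~ separates (ci_graph Sb) j i k ->
  noncut_vertex (ci_graph Sb) j.
Proof.
move=> Pa Ta Ga Pb Tb Gb offdiag j i k sa nsb x y; apply/negP => sb.
have offdiag' i' k' : i' != k' -> Sb i' k' = Sa i' k' by move/offdiag.
have [lt_ab _] := separates_diag_lt Pa Pb Tb Gb offdiag sa nsb.
have [sa'|nsa'] := boolP (separates (ci_graph Sa) j x y).
  by move: lt_ab; rewrite (separates_diag_eq Pa Pb Tb offdiag sa' sb) ltxx.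
have [lt_ba _] := separates_diag_lt Pb Pa Ta Ga offdiag' sb nsa'.
by move: lt_ab; rewrite ltNge ltW.
Qed.

Section Decomposition.
Variables (R : realType) (n : nat) (S1 D1 S2 D2 : 'M[R]_n) (lam : R).
Hypotheses (P1 : posdef S1) (T1 : is_tree (ci_graph S1)).
Hypotheses (N1 : nonneg_diag D1) (G1 : min_eig_ge S1 lam).
Hypothesis leaf_nb_lt : forall b, leaf_neighbor (ci_graph S1) b -> D1 b b < lam.
Hypothesis decomp : S1 + D1 = S2 + D2.
Hypotheses (P2 : posdef S2) (G2 : min_eig_ge S2 lam).
Hypotheses (T2 : is_tree (ci_graph S2)) (N2 : nonneg_diag D2).
Local Notation e1 := (ci_graph S1).
Local Notation e2 := (ci_graph S2).

Lemma decomp_offdiag i k : i != k -> S1 i k = S2 i k.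
Proof.
move=> ik; have := congr1 (fun M : 'M[R]_n => M i k) decomp.
by rewrite !mxE (is_diag_mxP N1.1) // (is_diag_mxP N2.1) // !addr0.
Qed.

Lemma decomp_diag b : S1 b b + D1 b b = S2 b b + D2 b b.
Proof. by have := congr1 (fun M : 'M[R]_n => M b b) decomp; rewrite !mxE. Qed.

Let e1_sym := ci_graph_sym P1.
Let e2_sym := ci_graph_sym P2.
Let e1_irr := @ci_graph_irr R n S1.
Let e2_irr := @ci_graph_irr R n S2.
Let decomp_offdiag_sym i k (ik : i != k) : S2 i k = S1 i k := esym (decomp_offdiag ik).
Let sep1_noncut2 := separates_noncut P1 T1 G1 P2 T2 G2 decomp_offdiag.
Let sep2_noncut1 := separates_noncut P2 T2 G2 P1 T1 G1 decomp_offdiag_sym.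

Lemma noncut1_noncut2 j : noncut_vertex e1 j -> noncut_vertex e2 j.
Proof.
move=> nc1 i k; apply/negP => s2; have [ij kj _] := separates_neq s2.
have ji : j != i by rewrite eq_sym.
have [b e1jb _] := exists_neighbor T1 ji.
have jb := edge_neq e1_irr e1jb.
have Db : D1 b b < lam.
  have leaf_j := noncut_is_leaf e1_sym e1_irr T1 nc1 e1jb.
  by apply: leaf_nb_lt; exists j.
have fac2 x : x != j -> factors S2 b j x.
  move=> xj; have [->|xb] := eqVneq x b; first by rewrite /factors mulrC.
  have [s2b|ns2b] := boolP (separates e2 b j x); first exact: separates_factors.
  have s1b := noncut_leaf_separates e1_sym e1_irr T1 nc1 e1jb xj xb.
  have [_ le_b] := separates_diag_lt P1 P2 T2 G2 decomp_offdiag s1b ns2b.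
  by have := decomp_diag b; have := N2.2 b; lra.
exact: (factors_exclusive P2 T2 jb (separates_factors P2 s2) (fac2 i ij) (fac2 k kj)).
Qed.

Lemma ci_graph_sub12 : subrel e1 e2.
Proof.
move=> i k e1ik; apply: contraT => ne2ik.
have [j s2] := nonadjacent_separates e2_sym e2_irr T2 (edge_neq e1_irr e1ik) ne2ik.
by have := noncut1_noncut2 (sep2_noncut1 s2 (edge_not_separates j e1ik)) i k; rewrite s2.
Qed.

Lemma ci_graph_sub21 : subrel e2 e1.
Proof.
move=> i k e2ik; apply: contraT => ne1ik.
have [j s1] := nonadjacent_separates e1_sym e1_irr T1 (edge_neq e2_irr e2ik) ne1ik.
have [ij kj _] := separates_neq s1; have ji : j != i by rewrite eq_sym.
have nc2 := sep1_noncut2 s1 (edge_not_separates j e2ik).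
have [c e2jc _] := exists_neighbor T2 ji; have jc := edge_neq e2_irr e2jc.
have fac1 x : x != j -> factors S1 c j x.
  move=> xj; have [->|xc] := eqVneq x c; first by rewrite /factors mulrC.
  have [s1c|ns1c] := boolP (separates e1 c j x); first exact: separates_factors.
  have s2c := noncut_leaf_separates e2_sym e2_irr T2 nc2 e2jc xj xc.
  by have := noncut1_noncut2 (sep2_noncut1 s2c ns1c) j x; rewrite s2c.
by case: (factors_exclusive P1 T1 jc (separates_factors P1 s1) (fac1 i ij) (fac1 k kj)).
Qed.
End Decomposition.

Theorem theorem5 (R : realType) (n : nat)
  (Sigma_star D_star : 'M[R]_n) (lam_min : R) :
  posdef Sigma_star ->
  is_tree (ci_graph Sigma_star) ->
  nonneg_diag D_star ->
  min_eig_ge Sigma_star lam_min ->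
  (forall b, leaf_neighbor (ci_graph Sigma_star) b -> D_star b b < lam_min) ->
  forall Sigma' D' : 'M[R]_n,
    Sigma_star + D_star = Sigma' + D' ->
    posdef Sigma' ->
    min_eig_ge Sigma' lam_min ->
    is_tree (ci_graph Sigma') ->
    nonneg_diag D' ->
    ci_graph Sigma' =2 ci_graph Sigma_star.
Proof.
move=> P1 T1 N1 G1 leaf_nb_lt Sigma' D' decomp P2 G2 T2 N2 i k; apply/idP/idP.
- exact: (ci_graph_sub21 P1 T1 N1 G1 leaf_nb_lt decomp P2 G2 T2 N2).
- exact: (ci_graph_sub12 P1 T1 N1 G1 leaf_nb_lt decomp P2 G2 T2 N2).
Qed.
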